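(* Let $p$ be a prime. There exists a subset $A\subseteq\mathbb{F}_p$ with $A-A\doteq\mathcal{R}_p$ if and only if $p=2n(n-1)+1$ for some integer $n$ and there exists $\alpha\in\mathcal{O}$ such that $|\alpha|^2=n+\rho$ and $\operatorname{tr}(\alpha\zeta^{-k})\in\{-n,p-n\}$ for every integer $k$.
   Context: $\mathcal{R}_p$ is the set of nonzero quadratic residues modulo $p$. $A-A\doteq S$ means: every element of $S$ has exactly one representation as $a'-a''$ with $a',a''\in A$, and every difference $a'-a''$ with $a'\ne a''$ in $A$ lies in $S$. $\zeta\in\mathbb{C}$ is a primitive $p$-th root of unity, $K=\mathbb{Q}(\zeta)$, $\mathcal{O}=\mathbb{Z}[\zeta]$ its ring of integers, $\operatorname{tr}$ the trace from $K$ to $\mathbb{Q}$, $|\cdot|$ the complex absolute value, and $\rho:=\sum_{x\in\mathcal{R}_p}\zeta^x$ (the quadratic Gaussian period, equal to $(\sqrt p-1)/2$ for $\zeta=e^{2\pi i/p}$ when $p\equiv1\pmod 4$). *)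

From HB Require Import structures.
From mathcomp Require Import all_boot all_order all_algebra all_field.
Set Implicit Arguments. Unset Strict Implicit. Unset Printing Implicit Defensive.
Import Order.TTheory GRing.Theory Num.Theory.
Local Open Scope ring_scope.

Definition QR (p : nat) : {set 'F_p} :=
  [set x : 'F_p | (x != 0) && [exists y : 'F_p, y ^+ 2 == x]].

Definition diff_exact (p : nat) (A S : {set 'F_p}) : Prop :=
  (forall s, s \in S ->
     #|[set u in setX A A | u.1 - u.2 == s]| = 1%N) /\
  (forall a1 a2, a1 \in A -> a2 \in A -> a1 != a2 -> a1 - a2 \in S).

(* the element q(z) of Z[z], for q an integer polynomial *)
Definition Zeval (z : algC) (q : {poly int}) : algC := (map_poly intr q).[z].

(* trace from Q(z) to Q of the element q(z), z a primitive p-th root of unity: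
   sum of its conjugates under the embeddings z |-> z^j, 1 <= j < p *)
Definition cyc_tr (p : nat) (z : algC) (q : {poly int}) : algC :=
  \sum_(1 <= j < p) Zeval (z ^+ j) q.

Definition gauss_period (p : nat) (z : algC) : algC :=
  \sum_(x in QR p) z ^+ (x : nat).

(* Write [s(X) = \sum_(x in X) z^x].  Expanding [|s(X)|^2 = s(X) s(X)^*] gives
   [\sum_d N_X(d) z^d], where [N_X(d)] counts the representations of [d] as a
   difference of two elements of [X].  Since [1 + z + ... + z^(p-1) = 0] is the only
   integer relation among the powers of [z], the equation [|s(X)|^2 = n + rho]
   forces [N_X(d) = [d \in R_p] + |X| - n] for every [d != 0]; counting all pairs
   then gives [(|X| - n) (|X| + n - p) = 0] when [p = 2n(n-1) + 1], so [X] or its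
   complement is a perfect difference set for [R_p].  Conversely [alpha = s(A)]
   satisfies the norm equation and [tr(alpha z^-k) = p [k \in A] - |A|].  For a
   general [alpha = q(z)], [tr(alpha z^-k) = p c_k - q(1)] where [c_k] sums the
   coefficients of [q] whose exponent is [k] mod [p]; the trace condition forces
   [c_k] to take two consecutive values, i.e. [alpha = s(A)] for some [A]. *)

From HB Require Import structures.
From mathcomp Require Import all_boot all_order all_algebra all_field.
From mathcomp Require Import ring zify.
Set Implicit Arguments. Unset Strict Implicit. Unset Printing Implicit Defensive.
Import Order.TTheory GRing.Theory Num.Theory.
Local Open Scope ring_scope.

Lemma sum_prim_root_exprM {R : idomainType} {n : nat} {z : R} (t : nat) :
  n.-primitive_root z -> \sum_(j < n) z ^+ (j * t) = if (n %| t)%N then n%:R else 0.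
Proof.
move=> prim_z.
have zt_n : (z ^+ t) ^+ n = 1 by rewrite -exprM mulnC exprM (prim_expr_order prim_z) expr1n.
under eq_bigr do rewrite mulnC exprM.
case: ifP => [n_dvd_t | n_ndvd_t].
  move: n_dvd_t; rewrite (prim_order_dvd prim_z) => /eqP ->.
  by rewrite (eq_bigr (fun=> 1)) ?sumr_const ?card_ord // => j _; rewrite expr1n.
have zt_neq1 : z ^+ t != 1 by rewrite -(prim_order_dvd prim_z) n_ndvd_t.
apply/eqP; have := subrX1 (z ^+ t) n.
by rewrite zt_n subrr => /esym/eqP; rewrite mulf_eq0 subr_eq0 (negbTE zt_neq1).
Qed.

Section DifferenceCounts.
Variable p : nat.

Definition diff_count (X : {set 'F_p}) (d : 'F_p) : nat :=
  #|[set u in setX X X | u.1 - u.2 == d]|.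

Lemma diff_exactP (X S : {set 'F_p}) : 0 \notin S ->
  diff_exact X S <-> forall d, d != 0 -> diff_count X d = (d \in S).
Proof.
move=> S0; split=> [[uniq_rep diff_in] d d0 | count_S].
  case: (boolP (d \in S)) => [/uniq_rep // | dS]; apply/eqP; rewrite cards_eq0.
  apply/eqP/setP=> -[a1 a2]; rewrite !inE /=; apply/negP=> /andP[/andP[a1X a2X] /eqP da].
  by move: dS; rewrite -da diff_in // -subr_eq0 da.
split=> [s sS | a1 a2 a1X a2X a12].
  have s0 : s != 0 by apply: contraNneq S0 => <-.
  by have := count_S s s0; rewrite sS.
have d0 : a1 - a2 != 0 by rewrite subr_eq0.
apply: contraT => dS; have := count_S _ d0; rewrite (negbTE dS) => /eqP.
rewrite cards_eq0 => /eqP/setP/(_ (a1, a2)).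
by rewrite !inE a1X a2X eqxx.
Qed.

Lemma diff_count0 (X : {set 'F_p}) : diff_count X 0 = #|X|.
Proof.
rewrite /diff_count -(card_imset X (fun x y (exy : (x, x) = (y, y)) => congr1 fst exy)).
apply: eq_card=> -[a b]; rewrite !inE subr_eq0 /=.
apply/andP/imsetP=> [[/andP[aX _] /eqP <-] | [x xX [-> ->]]]; last by rewrite xX.
by exists a.
Qed.

Lemma sum_diff_count (X : {set 'F_p}) :
  (\sum_(d : 'F_p) diff_count X d = #|X| * #|X|)%N.
Proof.
rewrite -cardsX -sum1_card (partition_big (fun u => u.1 - u.2) xpredT) //=.
by apply: eq_bigr => d _; rewrite /diff_count -sum1_card; apply: eq_bigl => u; rewrite !inE.
Qed.

Lemma sum_diff_count_neq0 (X : {set 'F_p}) :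
  (#|X| * #|X|)%:Z = #|X|%:Z + \sum_(d : 'F_p | d != 0) (diff_count X d)%:Z.
Proof.
rewrite -sum_diff_count (bigD1 0) //= diff_count0 PoszD; congr (_ + _).
by rewrite -natz natr_sum; apply: eq_bigr => d _; rewrite natz.
Qed.

End DifferenceCounts.

Section PrimeField.
Variable p : nat.
Hypothesis pr_p : prime p.

Lemma ltn_Fp (x : 'F_p) : (x < p)%N.
Proof. by rewrite -[X in (_ < X)%N](Fp_cast pr_p) ltn_ord. Qed.

Lemma sum_Fp (V : nmodType) (f : 'F_p -> V) :
  \sum_(x : 'F_p) f x = \sum_(i < p) f i%:R.
Proof.
rewrite (reindex (fun i : 'I_p => (i : nat)%:R)) //.
exists (fun x : 'F_p => Ordinal (ltn_Fp x)) => [i _ | x _]; last exact: natr_Zp.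
by apply: val_inj; rewrite /= val_Fp_nat // modn_small.
Qed.

Lemma dvdn_addn_Fp (i m : nat) : (p %| i + m)%N = (i%:R == - m%:R :> 'F_p).
Proof. by rewrite (dvdn_pcharf (pchar_Fp pr_p)) natrD addr_eq0. Qed.

Lemma QR0 : (0 : 'F_p) \notin QR p.
Proof. by rewrite inE eqxx. Qed.

Lemma QR1 : (1 : 'F_p) \in QR p.
Proof. by rewrite inE oner_neq0; apply/existsP; exists 1; rewrite expr1n. Qed.

Lemma card_predC1_Fp : #|predC1 (0 : 'F_p)| = p.-1.
Proof. by rewrite cardC1 card_Fp. Qed.

Lemma card_QR_le : (#|QR p| <= p.-1)%N.
Proof.
rewrite -card_predC1_Fp; apply: subset_leq_card; apply/subsetP => x.
by rewrite !inE => /andP[].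
Qed.

Lemma card_QR : p != 2%N -> (2 * #|QR p| = p.-1)%N.
Proof.
move=> p_neq2.
have two_neq0 : (2%:R : 'F_p) != 0.
  rewrite -(dvdn_pcharf (pchar_Fp pr_p)); apply/negP => /(dvdn_leq (isT : (0 < 2)%N)).
  by have := prime_gt1 pr_p; move: p_neq2; lia.
rewrite -card_predC1_Fp -[#|predC1 _|]sum1_card.
rewrite (partition_big (fun y : 'F_p => y ^+ 2) (mem (QR p))) /=; last first.
  by move=> y; rewrite !inE => y0; rewrite expf_neq0 //=; apply/existsP; exists y.
rewrite mulnC -sum_nat_const; apply: eq_bigr => x.
rewrite inE => /andP[x0 /existsP[y /eqP yx]].
have y0 : y != 0 by apply: contraNneq x0 => y0; rewrite -yx y0 expr0n.
have y_neqN : y != - y.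
  by rewrite -subr_eq0 opprK -mulr2n -mulr_natl mulf_eq0 negb_or two_neq0.
transitivity #|[set y; - y]|; first by rewrite cards2 y_neqN.
rewrite -sum1_card; apply: eq_bigl => w.
rewrite !inE -yx eqf_sqr.
case: (eqVneq w 0) => [->|//].
by rewrite eq_sym (negbTE y0) eq_sym oppr_eq0 (negbTE y0).
Qed.

Lemma sum_QR_indicator : \sum_(d : 'F_p | d != 0) (d \in QR p)%:Z = #|QR p|%:Z.
Proof.
rewrite -sum1_card -[RHS]natz natr_sum [in RHS]big_mkcond [in RHS](bigD1 0) //=.
rewrite (negbTE QR0) add0r.
by apply: eq_bigr => d _; case: (d \in QR p).
Qed.

Lemma card_of_shifted_diff_count (X : {set 'F_p}) (n : int) :
  p%:Z = 2 * n * (n - 1) + 1 ->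
  (forall d, d != 0 -> (diff_count X d)%:Z = (d \in QR p)%:Z + (#|X|%:Z - n)) ->
  #|X|%:Z = n \/ #|X|%:Z + n = p%:Z.
Proof.
move=> pE countX.
have p_neq2 : p != 2%N by apply/eqP => p2; move: pE; rewrite p2; lia.
have cardQR : #|QR p|%:Z = n * (n - 1).
  by have := card_QR p_neq2; have := prime_gt0 pr_p; lia.
have := sum_diff_count_neq0 X.
rewrite (eq_bigr _ countX) big_split /= sum_QR_indicator sumr_const cardQR.
rewrite (eq_card (B := predC1 (0 : 'F_p))) // cardC1 card_Fp // -mulr_natr natz.
have -> : (p.-1)%:Z = 2 * n * (n - 1) by have := prime_gt0 pr_p; lia.
move=> cardX.
have /eqP : (#|X|%:Z - n) * (#|X|%:Z + n - p%:Z) = 0.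
  by rewrite PoszM in cardX; rewrite pE -(subrr (#|X|%:Z * #|X|%:Z)) {2}cardX; ring.
by rewrite mulf_eq0 !subr_eq0 => /orP[] /eqP; [left|right].
Qed.

Lemma card_diff_exact_QR (A : {set 'F_p}) :
  diff_exact A (QR p) -> p%:Z = 2 * #|A|%:Z * (#|A|%:Z - 1) + 1.
Proof.
move=> /(diff_exactP _ QR0) countA.
have := sum_diff_count_neq0 A.
under eq_bigr => d d0 do rewrite countA //.
rewrite sum_QR_indicator -PoszD => /eqP; rewrite eqz_nat => /eqP cardA.
have [p2 | p_neq2] := eqVneq p 2%N.
  have QR_gt0 : (0 < #|QR p|)%N by apply/card_gt0P; exists 1; exact: QR1.
  have QR_le1 : (#|QR p| <= 1)%N by have := card_QR_le; rewrite [in X in (_ <= X)%N]p2.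
  have QR1E : #|QR p| = 1%N by apply/eqP; rewrite eqn_leq QR_le1.
  by move: cardA; rewrite QR1E; case: #|A| => [|[|x]] //; nia.
by have := card_QR p_neq2; have := prime_gt0 pr_p; nia.
Qed.

End PrimeField.

Section AdditiveCharacter.
Variables (p : nat) (z : algC).
Hypotheses (pr_p : prime p) (prim_z : p.-primitive_root z).

Definition chi (x : 'F_p) : algC := z ^+ x.

Lemma chi_nat (a : nat) : chi a%:R = z ^+ a.
Proof. by rewrite /chi val_Fp_nat // prim_expr_mod. Qed.

Lemma chi0 : chi 0 = 1.
Proof. exact: expr0. Qed.

Lemma chiD x y : chi (x + y) = chi x * chi y.
Proof. by rewrite -(natr_Zp x) -(natr_Zp y) -natrD !chi_nat exprD. Qed.

Lemma chi_neq0 x : chi x != 0.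
Proof. by rewrite expf_neq0 // (prim_root_eq0 prim_z) -lt0n prime_gt0. Qed.

Lemma chiN x : chi (- x) = (chi x)^-1.
Proof. by apply: (mulIf (chi_neq0 x)); rewrite -chiD addNr chi0 mulVf ?chi_neq0. Qed.

Lemma conj_chi x : (chi x)^* = chi (- x).
Proof.
have norm_chi : `|chi x| = 1.
  apply/eqP; rewrite -(@pexpr_eq1 _ _ p (prime_gt0 pr_p)) // -normrX /chi.
  by rewrite -exprM mulnC exprM (prim_expr_order prim_z) expr1n normr1.
rewrite chiN; apply: (mulIf (chi_neq0 x)).
by rewrite mulVf ?chi_neq0 // -normCKC norm_chi expr1n.
Qed.

Lemma sum_chi : \sum_(x : 'F_p) chi x = 0.
Proof.
rewrite (sum_Fp pr_p) (eq_bigr (fun i : 'I_p => z ^+ (i * 1))) => [|i _]; last by rewrite chi_nat muln1.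
by rewrite (sum_prim_root_exprM 1 prim_z) dvdn1 (gtn_eqF (prime_gt1 pr_p)).
Qed.

(* The minimal polynomial of [z] is [1 + X + ... + X^(p-1)], so this is the only
   rational linear relation among [1, z, ..., z^(p-1)]. *)
Lemma prim_root_rat_rel_const (f : nat -> rat) :
  \sum_(i < p) ratr (f i) * z ^+ i = 0 -> forall i, (i < p)%N -> f i = f 0%N.
Proof.
have [pf [Dpf _] dvd_pf] := minCpolyP z.
have size_pf : size pf = p.
  rewrite -(size_map_poly (ratr : rat -> algC)) -Dpf (minCpoly_cyclotomic prim_z).
  by rewrite size_cyclotomic totient_prime // prednK // prime_gt0.
have dvd_poly (g : nat -> rat) :
    \sum_(i < p) ratr (g i) * z ^+ i = 0 -> pf %| \poly_(i < p) g i.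
  move=> g_rel; rewrite -dvd_pf /root.
  have -> : map_poly (ratr : rat -> algC) (\poly_(i < p) g i) = \poly_(i < p) ratr (g i).
    by apply/polyP => i; rewrite coef_map /= !coef_poly; case: ifP => _ //; rewrite rmorph0.
  by rewrite horner_poly g_rel.
move=> f_rel i ip; have p_gt0 := prime_gt0 pr_p.
pose P := \poly_(i < p) f i; pose J := \poly_(i < p) (1 : rat).
have dvd_P : pf %| P := dvd_poly f f_rel.
have dvd_J : pf %| J.
  apply: dvd_poly; rewrite -[RHS]sum_chi (sum_Fp pr_p).
  by apply: eq_bigr => j _; rewrite rmorph1 mul1r chi_nat.
have [P0 | P_neq0] := eqVneq P 0.
  have coefP j : (j < p)%N -> f j = 0.
    move=> jp; have : P`_j = 0 by rewrite P0 coef0.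
    by rewrite coef_poly jp.
  by rewrite !coefP.
have size_J : size J = p by rewrite size_poly_eq ?oner_neq0.
have size_P : size P = p by apply/eqP; rewrite eqn_leq size_poly -{1}size_pf dvdp_leq.
have /eqpP[[a b] /andP[a0 _] /= ePJ] : P %= J.
  apply: eqp_trans (_ : P %= pf) _; first by rewrite eqp_sym -dvdp_size_eqp // size_P size_pf.
  by rewrite -dvdp_size_eqp // size_J size_pf.
have coef_aP j : (j < p)%N -> a * f j = b.
  move=> jp; have : (a *: P)`_j = (b *: J)`_j by rewrite ePJ.
  by rewrite !coefZ !coef_poly jp mulr1.
by apply: (mulfI a0); rewrite !coef_aP.
Qed.

Lemma chi_sum_eq0_const (c : 'F_p -> int) :
  \sum_(x : 'F_p) (c x)%:~R * chi x = 0 -> forall x, c x = c 0.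
Proof.
rewrite (sum_Fp pr_p) => c_rel x.
have rat_rel : \sum_(i < p) ratr (c i%:R)%:~R * z ^+ i = 0.
  by rewrite -[RHS]c_rel; apply: eq_bigr => i _; rewrite ratr_int chi_nat.
have rel_const := @prim_root_rat_rel_const (fun i => (c i%:R)%:~R) rat_rel.
apply/eqP; rewrite -(eqr_int rat) -[x]natr_Zp -[0 : 'F_p](natr_Zp 0).
by rewrite (rel_const x) ?(ltn_Fp pr_p).
Qed.

Lemma sqr_norm_chi_sum (X : {set 'F_p}) :
  `|\sum_(x in X) chi x| ^+ 2 = \sum_(d : 'F_p) (diff_count X d)%:R * chi d.
Proof.
rewrite normCK rmorph_sum big_distrl /=.
under eq_bigr do rewrite big_distrr /=.
under eq_bigr do under eq_bigr do rewrite conj_chi -chiD.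
rewrite pair_big_dep /= (partition_big (fun u => u.1 - u.2) xpredT) //=.
apply: eq_bigr => d _; rewrite (eq_bigr (fun=> chi d)) => [|u /andP[_ /eqP ->] //].
rewrite sumr_const mulr_natl; congr (_ *+ _).
by apply: eq_card => u; rewrite !inE.
Qed.

Lemma sqr_norm_diff_exact_QR (A : {set 'F_p}) : diff_exact A (QR p) ->
  `|\sum_(x in A) chi x| ^+ 2 = (#|A|%:Z)%:~R + gauss_period p z.
Proof.
move=> /(diff_exactP _ (@QR0 p)) countA.
rewrite sqr_norm_chi_sum (bigD1 0) //= diff_count0 chi0 mulr1; congr (_ + _).
rewrite /gauss_period [RHS]big_mkcond [RHS](bigD1 0) //= (negbTE (@QR0 p)) add0r.
by apply: eq_bigr => d d0; rewrite countA //; case: (d \in QR p); rewrite ?mul1r ?mul0r.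
Qed.

Lemma diff_count_of_sqr_norm (X : {set 'F_p}) (n : int) :
  `|\sum_(x in X) chi x| ^+ 2 = n%:~R + gauss_period p z ->
  forall d, d != 0 -> (diff_count X d)%:Z = (d \in QR p)%:Z + (#|X|%:Z - n).
Proof.
move=> normX d d0.
pose c (d : 'F_p) : int := (diff_count X d)%:Z - (d == 0)%:Z * n - (d \in QR p)%:Z.
have c_rel : \sum_(x : 'F_p) (c x)%:~R * chi x = 0.
  have cE x : (c x)%:~R * chi x = (diff_count X x)%:R * chi x
      - ((x == 0)%:R * n%:~R * chi x + (x \in QR p)%:R * chi x).
    by rewrite /c !intrB !intrM !pmulrn; ring.
  rewrite (eq_bigr _ (fun x _ => cE x)) sumrB -sqr_norm_chi_sum normX big_split /=.
  rewrite (bigD1 0) //= big1 => [|x /negbTE ->]; last by rewrite !mul0r.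
  rewrite chi0 mulr1 mul1r addr0 /gauss_period big_mkcond; apply/eqP; rewrite subr_eq0.
  by apply/eqP; congr (_ + _); apply: eq_bigr => x _; case: (x \in QR p); rewrite ?mul1r ?mul0r.
have := chi_sum_eq0_const c_rel d.
rewrite /c (negbTE d0) (negbTE (@QR0 p)) diff_count0 eqxx /= mul0r mul1r !subr0.
lia.
Qed.

Lemma chi_sum_setC (X : {set 'F_p}) :
  \sum_(x in ~: X) chi x = - \sum_(x in X) chi x.
Proof.
apply/eqP; rewrite -addr_eq0 addrC; apply/eqP.
rewrite -[RHS]sum_chi [RHS](bigID (mem X)) /=; congr (_ + _).
by apply: eq_bigl => x; rewrite inE.
Qed.

Lemma diff_exact_of_norm (X : {set 'F_p}) (n : int) :
  p%:Z = 2 * n * (n - 1) + 1 ->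
  `|\sum_(x in X) chi x| ^+ 2 = n%:~R + gauss_period p z ->
  exists A : {set 'F_p}, diff_exact A (QR p).
Proof.
move=> pE normX.
have diff_exact_of_card (Y : {set 'F_p}) : `|\sum_(x in Y) chi x| ^+ 2 = n%:~R + gauss_period p z ->
    #|Y|%:Z = n -> diff_exact Y (QR p).
  move=> normY cardY; apply/(diff_exactP _ (@QR0 p)) => d d0.
  by apply/eqP; rewrite -eqz_nat (diff_count_of_sqr_norm normY) // cardY subrr addr0.
have [cardX | cardXC] := card_of_shifted_diff_count pr_p pE (diff_count_of_sqr_norm normX).
  by exists X; apply: diff_exact_of_card.
exists (~: X); apply: diff_exact_of_card; first by rewrite chi_sum_setC normrN.
by have := cardsC X; rewrite card_Fp //; lia.
Qed.

Lemma cyc_tr_sum (I : Type) (r : seq I) (P : pred I) (F : I -> {poly int}) :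
  cyc_tr p z (\sum_(i <- r | P i) F i) = \sum_(i <- r | P i) cyc_tr p z (F i).
Proof.
rewrite /cyc_tr exchange_big /=; apply: eq_bigr => j _.
by rewrite /Zeval rmorph_sum horner_sum.
Qed.

Lemma cyc_trZ (c : int) (q : {poly int}) : cyc_tr p z (c *: q) = c%:~R * cyc_tr p z q.
Proof.
by rewrite /cyc_tr mulr_sumr; apply: eq_bigr => j _; rewrite /Zeval map_polyZ hornerZ.
Qed.

Lemma cyc_tr_Xn (t : nat) : cyc_tr p z 'X^t = (if (p %| t)%N then p%:R else 0) - 1.
Proof.
rewrite /cyc_tr /Zeval -(sum_prim_root_exprM t prim_z) -(big_mkord xpredT (fun j => z ^+ (j * t))).
rewrite (big_ltn (prime_gt0 pr_p)) mul0n expr0 addrAC subrr add0r.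
by apply: eq_bigr => j _; rewrite map_polyXn hornerXn -exprM.
Qed.

Lemma cyc_tr_indicator_mulXn (A : {set 'F_p}) (m : nat) :
  cyc_tr p z ((\sum_(a in A) 'X^a) * 'X^m) = (p%:Z * (- m%:R \in A) - #|A|%:Z)%:~R.
Proof.
rewrite big_distrl cyc_tr_sum /=.
under eq_bigr do rewrite -exprD cyc_tr_Xn (dvdn_addn_Fp pr_p) natr_Zp.
rewrite sumrB sumr_const -big_mkcondr /= intrB intrM; congr (_ - _).
case: (boolP (- m%:R \in A)) => [mA | mNA].
  rewrite (big_pred1 (- m%:R)) ?mA ?mulr1 // => x /=.
  by case: eqP => [->|]; rewrite ?mA ?andbF.
rewrite big_pred0 ?(negbTE mNA) ?mulr0 // => x.
by apply: contraNF mNA => /andP[xA /eqP <-].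
Qed.

Definition class_coef (q : {poly int}) (x : 'F_p) : int :=
  \sum_(i < size q | i%:R == x) q`_i.

Lemma Zeval_class_coef (q : {poly int}) :
  Zeval z q = \sum_(x : 'F_p) (class_coef q x)%:~R * chi x.
Proof.
rewrite /Zeval horner_coef (size_map_inj_poly (@intr_inj algC)) //.
rewrite (partition_big (fun i : 'I_(size q) => (i : nat)%:R : 'F_p) xpredT) //=.
apply: eq_bigr => x _; rewrite rmorph_sum mulr_suml /=.
by apply: eq_bigr => i /eqP <-; rewrite coef_map chi_nat.
Qed.

Lemma cyc_tr_mulXn (q : {poly int}) (m : nat) :
  cyc_tr p z (q * 'X^m) = (p%:Z * class_coef q (- m%:R) - \sum_(i < size q) q`_i)%:~R.
Proof.
rewrite -{1}[q]coefK poly_def big_distrl cyc_tr_sum /=.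
under eq_bigr do rewrite -scalerAl -exprD cyc_trZ cyc_tr_Xn (dvdn_addn_Fp pr_p).
rewrite intrB intrM rmorph_sum mulr_sumr /class_coef rmorph_sum /= [in RHS]big_mkcond -sumrB.
by apply: eq_bigr => i _; case: ifP; rewrite ?mulr0 ?mulr1 ?sub0r ?mulrN1 => _; ring.
Qed.

Lemma Zeval_of_class_coef (q : {poly int}) (A : {set 'F_p}) (t : int) :
  (forall x, class_coef q x = t + (x \in A)%:Z) -> Zeval z q = \sum_(x in A) chi x.
Proof.
move=> qA; rewrite Zeval_class_coef.
under eq_bigr do rewrite qA intrD mulrDl.
rewrite big_split /= -mulr_sumr sum_chi mulr0 add0r [RHS]big_mkcond /=.
by apply: eq_bigr => x _; case: (x \in A); rewrite ?mul1r ?mul0r.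
Qed.

Lemma Zeval_sum_Xn (A : {set 'F_p}) : Zeval z (\sum_(a in A) 'X^a) = \sum_(a in A) chi a.
Proof.
by rewrite /Zeval rmorph_sum horner_sum; apply: eq_bigr => a _; rewrite /= map_polyXn hornerXn.
Qed.

Lemma class_coef_two_valued (q : {poly int}) (n : int) :
  (forall k : int, cyc_tr p z (q * 'X^(absz ((- k) %% p%:Z)%Z))
     \in [:: (- n)%:~R; (p%:Z - n)%:~R]) ->
  exists (A : {set 'F_p}) (t : int), forall x, class_coef q x = t + (x \in A)%:Z.
Proof.
move=> trq; set S := \sum_(i < size q) q`_i.
(* The trace condition at [k := - (- x)] reads [p * class_coef q x - S \in [:: - n; p - n]]. *)
have classE x : (p%:Z * class_coef q x - S + n == 0) || (p%:Z * class_coef q x - S + n == p%:Z).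
  have := trq (- (nat_of_ord (- x))%:Z).
  rewrite opprK modz_nat absz_nat modn_small ?(ltn_Fp pr_p) // cyc_tr_mulXn natr_Zp opprK.
  by rewrite !inE => /orP[] /eqP/(@intr_inj algC) trE; apply/orP; [left|right]; apply/eqP; lia.
pose A := [set x | p%:Z * class_coef q x - S + n == p%:Z].
have p_neq0 : p%:Z != 0 by rewrite eqz_nat -lt0n prime_gt0.
have scaled x : p%:Z * (class_coef q x - (x \in A)%:Z) = S - n.
  have := classE x; rewrite inE.
  case: (eqVneq (p%:Z * class_coef q x - S + n) p%:Z) => [eq_p _ | _]; first lia.
  by rewrite orbF subr0 => /eqP; lia.
exists A, (class_coef q 0 - (0 \in A)%:Z) => x.
by have := scaled x; rewrite -(scaled 0) => /(mulfI p_neq0) <-; rewrite subrK.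
Qed.

End AdditiveCharacter.

Theorem propositionA1 (p : nat) (zeta : algC) :
  prime p -> p.-primitive_root zeta ->
  (exists A : {set 'F_p}, diff_exact A (QR p)) <->
  (exists n : int,
     (p%:Z = 2 * n * (n - 1) + 1) /\
     exists q : {poly int},
       `|Zeval zeta q| ^+ 2 = n%:~R + gauss_period p zeta /\
       forall k : int,
         cyc_tr p zeta (q * 'X^(absz ((- k) %% p%:Z)%Z))
           \in [:: (- n)%:~R; (p%:Z - n)%:~R]).
Proof.
move=> pr_p prim_z; split=> [[A exactA] | [n [pE [q [normq trq]]]]].
  exists #|A|%:Z; split; first exact: card_diff_exact_QR.
  exists (\sum_(a in A) 'X^a); split.
    by rewrite Zeval_sum_Xn; apply: sqr_norm_diff_exact_QR.
  move=> k; rewrite cyc_tr_indicator_mulXn // !inE.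
  by case: (_ \in A); rewrite ?mulr1 ?mulr0 ?sub0r ?eqxx ?orbT.
have [A [t qA]] := class_coef_two_valued pr_p prim_z trq.
rewrite (Zeval_of_class_coef pr_p prim_z qA) in normq.
exact (diff_exact_of_norm pr_p prim_z pE normq).
Qed.
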